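(* Let $n\ge 3$ and let $f:[n]\to\mathbb{R}$ be a function having at most $2$ distinct discrete derivatives. Consider the following deterministic adaptive procedure: (1) Query $f(1),f(2),f(n-1),f(n)$. (2) Define the affine functions $f_1(x)=f(1)+(x-1)\bigl(f(2)-f(1)\bigr)$ and $f_2(x)=f(n)-(n-x)\bigl(f(n)-f(n-1)\bigr)$. (3) If there is no $j\in[n]$ with $f_1(j)=f_2(j)$, reject. Otherwise pick any such $j\in[n]$ and query $f(j)$. (4) Reject if the restriction of $f$ to $\{1,2,j,n-1,n\}$ is not convex or if $f(j)\neq f_1(j)$; otherwise accept. Then this procedure makes at most $5$ queries, accepts every convex such $f$, and rejects every such $f$ that is not convex. In particular, there is a deterministic algorithm that, given oracle access to any $f:[n]\to\mathbb{R}$ with at most $2$ distinct discrete derivatives, decides exactly whether $f$ is convex using at most $5$ adaptive queries.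
   Context: For $f:[n]\to\mathbb{R}$ (where $[n]=\{1,\dots,n\}$), the discrete derivative at $i\in[n-1]$ is $\Delta_f(i)=f(i+1)-f(i)$; the number of distinct discrete derivatives of $f$ is the cardinality of $\{\Delta_f(i): i\in[n-1]\}$. For a finite set $B\subseteq\mathbb{R}$, a function $g:B\to\mathbb{R}$ is convex if $\frac{g(y)-g(x)}{y-x}\le\frac{g(z)-g(y)}{z-y}$ for all $x<y<z$ in $B$; for $B=[n]$ this is equivalent to $\Delta_g$ being non-decreasing. ''Adaptive'' means later query points may depend on answers to earlier queries. *)

From mathcomp Require Import all_boot all_order all_algebra.
Set Implicit Arguments. Unset Strict Implicit. Unset Printing Implicit Defensive.
Import Order.TTheory GRing.Theory Num.Theory.
Local Open Scope ring_scope.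

Section Defs.
Variable R : realFieldType.

(* A function f : [n] -> R is represented by f : nat -> R, only its values
   on 1..n matter. *)

Definition dderiv (f : nat -> R) (i : nat) : R := f i.+1 - f i.

Definition num_dderivs (n : nat) (f : nat -> R) : nat :=
  size (undup [seq dderiv f i | i <- iota 1 n.-1]).

Definition convex_on (B : seq nat) (f : nat -> R) : Prop :=
  forall x y z : nat, x \in B -> y \in B -> z \in B -> (x < y)%N -> (y < z)%N ->
    (f y - f x) / (y%:R - x%:R) <= (f z - f y) / (z%:R - y%:R).

Definition convex (n : nat) (f : nat -> R) : Prop := convex_on (iota 1 n) f.

Definition f1 (n : nat) (f : nat -> R) (x : nat) : R :=
  f 1%N + (x%:R - 1) * (f 2%N - f 1%N).
Definition f2 (n : nat) (f : nat -> R) (x : nat) : R :=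
  f n - (n%:R - x%:R) * (f n - f n.-1).

Definition candidates (n : nat) (f : nat -> R) : seq nat :=
  [seq j <- iota 1 n | f1 n f j == f2 n f j].

(* A selection rule "pick any such j": any function choosing an element of a
   nonempty list of candidates. *)
Definition valid_pick (pick : seq nat -> nat) : Prop :=
  forall s : seq nat, s != [::] -> pick s \in s.

Definition queries (n : nat) (pick : seq nat -> nat) (f : nat -> R) : seq nat :=
  [:: 1%N; 2%N; n.-1; n] ++
  (if candidates n f is [::] then [::] else [:: pick (candidates n f)]).

Definition proc (n : nat) (pick : seq nat -> nat) (f : nat -> R) : Prop :=
  ~~ nilp (candidates n f) /\
  (let j := pick (candidates n f) in
   convex_on [:: 1%N; 2%N; j; n.-1; n] f /\ f j = f1 n f j).

End Defs.

(* With at most two distinct discrete derivatives, if the derivatives on a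
   range sum to the length of the range times c, then they all equal c.
   Hence if j is a candidate with f(j) = f1(j), f has slope D(1) on [1, j]
   and slope D(n-1) on [j, n]; convexity on {1, j, n} gives D(1) <= D(n-1),
   so D is nondecreasing and f is convex.  Conversely a convex f has
   nondecreasing derivatives, hence is such a two-piece function; its
   breakpoint is a candidate, and any candidate k has f(k) = f1(k), directly
   left of the breakpoint and via f(k) = f2(k) = f1(k) right of it. *)

From mathcomp Require Import all_boot all_order all_algebra.
From mathcomp Require Import zify ring.
Set Implicit Arguments. Unset Strict Implicit. Unset Printing Implicit Defensive.
Import Order.TTheory GRing.Theory Num.Theory.
Local Open Scope ring_scope.

Section DiscreteDerivative.
Variables (R : realFieldType) (f : nat -> R).
Local Notation D := (dderiv f).

Lemma sum_dderiv m p : (m <= p)%N -> \sum_(m <= i < p) D i = f p - f m.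
Proof. exact: telescope_sumr. Qed.

Lemma diff_le_of_dderiv_le m p c : (m <= p)%N ->
  (forall i, (m <= i < p)%N -> D i <= c) -> f p - f m <= (p%:R - m%:R) * c.
Proof.
move=> le_mp Dc; rewrite -sum_dderiv // -natrB // mulr_natl -sumr_const_nat.
exact: ler_sum_nat.
Qed.

Lemma diff_ge_of_dderiv_ge m p c : (m <= p)%N ->
  (forall i, (m <= i < p)%N -> c <= D i) -> (p%:R - m%:R) * c <= f p - f m.
Proof.
move=> le_mp Dc; rewrite -sum_dderiv // -natrB // mulr_natl -sumr_const_nat.
exact: ler_sum_nat.
Qed.

Lemma diff_of_dderiv_const m p c : (m <= p)%N ->
  (forall i, (m <= i < p)%N -> D i = c) -> f p - f m = (p%:R - m%:R) * c.
Proof.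
move=> le_mp Dc; apply/eqP; rewrite eq_le.
by rewrite diff_le_of_dderiv_le ?diff_ge_of_dderiv_ge // => i /Dc ->.
Qed.

(* Each product (D i - c) (D i0 - c) is nonnegative (zero or a square) and
   they sum to (f p - f m - (p - m) c) (D i0 - c) = 0, so they all vanish;
   the term i = i0 is (D i0 - c)^2. *)
Lemma dderiv_const_of_diff m p c :
  (forall i k, (m <= i < p)%N -> (m <= k < p)%N -> [\/ D i = D k, D i = c | D k = c]) ->
  f p - f m = (p%:R - m%:R) * c ->
  forall i, (m <= i < p)%N -> D i = c.
Proof.
move=> two_valued diff_c i0 range_i0; have le_mp : (m <= p)%N by lia.
have term_ge0 i : i \in index_iota m p -> 0 <= (D i - c) * (D i0 - c).
  rewrite mem_index_iota => range_i.
  case: (two_valued i i0 range_i range_i0) => [->|->|->].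
  - by rewrite -expr2 sqr_ge0.
  - by rewrite subrr mul0r.
  - by rewrite subrr mulr0.
have sum_eq0 : \sum_(i <- index_iota m p) (D i - c) * (D i0 - c) == 0.
  rewrite -big_distrl /= sumrB sumr_const_nat sum_dderiv // diff_c -natrB //.
  by rewrite mulr_natl subrr mul0r.
move: sum_eq0; rewrite big_seq psumr_eq0 // => /allP /(_ i0).
rewrite mem_index_iota range_i0 => /(_ isT) /=.
by rewrite -expr2 sqrf_eq0 subr_eq0 => /eqP.
Qed.

Lemma convexP n :
  convex n f <-> {in index_iota 1 n &, {homo D : i k / (i <= k)%N >-> i <= k}}.
Proof.
split=> [conv i k | mono x y z].
  rewrite !mem_index_iota => range_i range_k le_ik.
  elim: k le_ik range_k => [|k IH]; first by rewrite leqn0 => /eqP ->.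
  rewrite leq_eqVlt => /orP[/eqP -> //| lt_ik] range_k.
  apply: (le_trans (IH lt_ik _)); first lia.
  have unit_step q : q.+1%:R - q%:R = 1 :> R by rewrite -natrB // subSnn.
  have := conv k k.+1 k.+2; rewrite !mem_iota !unit_step !divr1.
  by apply; lia.
rewrite !mem_iota => range_x range_y range_z lt_xy lt_yz.
have gap_xy : 0 < y%:R - x%:R :> R by rewrite subr_gt0 ltr_nat.
have gap_yz : 0 < z%:R - y%:R :> R by rewrite subr_gt0 ltr_nat.
have mono' i k : (1 <= i)%N -> (i <= k)%N -> (k < n)%N -> D i <= D k.
  by move=> *; apply: mono; rewrite ?mem_index_iota; lia.
apply: (@le_trans _ _ (D y.-1)).
  rewrite ler_pdivrMr // mulrC; apply: diff_le_of_dderiv_le; first lia.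
  by move=> i range_i; apply: mono'; lia.
apply: (@le_trans _ _ (D y)); first by apply: mono'; lia.
rewrite ler_pdivlMr // mulrC; apply: diff_ge_of_dderiv_ge; first lia.
by move=> i range_i; apply: mono'; lia.
Qed.

Lemma convex_on_eq B g : {in B, f =1 g} -> convex_on B f -> convex_on B g.
Proof. by move=> eq_fg conv x y z Bx By Bz; rewrite -!eq_fg //; apply: conv. Qed.

Lemma convex_on_subset B B' : {subset B' <= B} -> convex_on B f -> convex_on B' f.
Proof. by move=> sub conv x y z Bx By Bz; apply: conv; apply: sub. Qed.

Lemma dderiv_pigeonhole n : (num_dderivs n f <= 2)%N ->
  forall i k l, (1 <= i < n)%N -> (1 <= k < n)%N -> (1 <= l < n)%N ->
  [\/ D i = D k, D i = D l | D k = D l].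
Proof.
move=> few i k l range_i range_k range_l.
case: (eqVneq (D i) (D k)) => [|ne_ik]; first by constructor 1.
case: (eqVneq (D i) (D l)) => [|ne_il]; first by constructor 2.
case: (eqVneq (D k) (D l)) => [|ne_kl]; first by constructor 3.
have in_dderivs q : (1 <= q < n)%N ->
    D q \in undup [seq D j | j <- iota 1 n.-1].
  by move=> range_q; rewrite mem_undup map_f // mem_iota; lia.
have sub : {subset [:: D i; D k; D l] <= undup [seq D j | j <- iota 1 n.-1]}.
  by move=> q; rewrite !inE => /or3P[] /eqP ->; apply: in_dderivs.
have := uniq_leq_size _ sub; rewrite /= !inE negb_or ne_ik ne_il ne_kl.
by move=> /(_ isT) /leq_trans /(_ few).
Qed.

End DiscreteDerivative.

Section Procedure.
Variables (R : realFieldType) (n : nat) (f : nat -> R).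
Local Notation D := (dderiv f).

Definition dderiv_split (j : nat) : Prop :=
  (forall i, (1 <= i < j)%N -> D i = D 1%N) /\
  (forall i, (j <= i < n)%N -> D i = D n.-1).

Lemma mem_candidates j :
  (j \in candidates n f) = (1 <= j <= n)%N && (f1 n f j == f2 n f j).
Proof. by rewrite mem_filter mem_iota add1n ltnS andbC. Qed.

Lemma f1_split j x : dderiv_split j -> (1 <= x <= j)%N -> f x = f1 n f x.
Proof.
move=> [left_part _] range_x.
have diff : f x - f 1%N = (x%:R - 1%:R) * D 1%N.
  by apply: diff_of_dderiv_const => [|i ?]; [|apply: left_part]; lia.
by rewrite mulr1n in diff; rewrite /f1 -diff; ring.
Qed.

Lemma f2_split j x : (1 <= n)%N -> dderiv_split j -> (j <= x <= n)%N ->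
  f x = f2 n f x.
Proof.
move=> n_gt0 [_ right_part] range_x.
have diff : f n - f x = (n%:R - x%:R) * D n.-1.
  by apply: diff_of_dderiv_const => [|i ?]; [|apply: right_part]; lia.
have last_slope : f n - f n.-1 = D n.-1 by rewrite /dderiv prednK.
by rewrite /f2 last_slope -diff; ring.
Qed.

Hypothesis n_ge3 : (3 <= n)%N.
Hypothesis few_dderivs : (num_dderivs n f <= 2)%N.

Lemma candidate_split j :
  j \in candidates n f -> f j = f1 n f j -> dderiv_split j.
Proof.
rewrite mem_candidates => /andP[range_j /eqP f1_f2] f_f1.
split.
  apply: (dderiv_const_of_diff (m := 1%N)); last first.
    by rewrite f_f1 /f1 mulr1n /dderiv; ring.
  move=> i k range_i range_k.
  by apply: (dderiv_pigeonhole few_dderivs); lia.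
apply: (dderiv_const_of_diff (p := n)); last first.
  by rewrite f_f1 f1_f2 /f2 /dderiv prednK; [ring | lia].
move=> i k range_i range_k.
by apply: (dderiv_pigeonhole few_dderivs); lia.
Qed.

Lemma split_dderiv_le j : (1 <= j <= n)%N -> dderiv_split j ->
  convex_on [:: 1%N; 2%N; j; n.-1; n] f -> D 1%N <= D n.-1.
Proof.
move=> range_j [left_part right_part] conv.
have [eq_j1 | ne_j1] := eqVneq j 1%N; first by rewrite right_part //; lia.
have [eq_jn | ne_jn] := eqVneq j n; first by rewrite left_part //; lia.
have := conv 1%N j n; rewrite !inE !eqxx ?orbT.
move=> /(_ isT isT isT ltac:(lia) ltac:(lia)) slopes.
have slope_1j : f j - f 1%N = (j%:R - 1%:R) * D 1%N.
  by apply: diff_of_dderiv_const => //; lia.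
have slope_jn : f n - f j = (n%:R - j%:R) * D n.-1.
  by apply: diff_of_dderiv_const => //; lia.
have gap_1j : j%:R - 1%:R != 0 :> R by rewrite subr_eq0 eqr_nat.
have gap_jn : n%:R - j%:R != 0 :> R by rewrite subr_eq0 eqr_nat eq_sym.
rewrite slope_1j slope_jn (mulrC (j%:R - _)) (mulrC (n%:R - _)) in slopes.
by rewrite (mulfK gap_1j) (mulfK gap_jn) in slopes.
Qed.

Lemma split_nondecreasing j : dderiv_split j -> D 1%N <= D n.-1 ->
  {in index_iota 1 n &, {homo D : i k / (i <= k)%N >-> i <= k}}.
Proof.
move=> [left_part right_part] le_ends i k; rewrite !mem_index_iota.
move=> range_i range_k le_ik.
have [lt_ij | le_ji] := ltnP i j; last by rewrite !right_part ?lexx //; lia.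
rewrite (left_part i); last lia.
have [lt_kj | le_jk] := ltnP k j; last by rewrite (right_part k) //; lia.
by rewrite (left_part k) ?lexx //; lia.
Qed.

Lemma nondecreasing_split :
  {in index_iota 1 n &, {homo D : i k / (i <= k)%N >-> i <= k}} ->
  exists2 j, (1 <= j <= n)%N & dderiv_split j.
Proof.
move=> mono.
have mono' i k : (1 <= i)%N -> (i <= k)%N -> (k < n)%N -> D i <= D k.
  by move=> *; apply: mono; rewrite ?mem_index_iota; lia.
have reach_last : exists i, (1 <= i)%N && (D i == D n.-1).
  by exists n.-1; rewrite eqxx andbT; lia.
case: (ex_minnP reach_last) => j /andP[j_gt0 /eqP Dj] j_min.
have le_j_last : (j <= n.-1)%N by apply: j_min; rewrite eqxx andbT; lia.
exists j; first lia.
split=> i range_i; last first.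
  by apply/eqP; rewrite eq_le -{2}Dj !mono'; lia.
have [// | Di_last | D1_last] := dderiv_pigeonhole few_dderivs
  (i := i) (k := 1%N) (l := n.-1) ltac:(lia) ltac:(lia) ltac:(lia).
  by have := j_min i; rewrite Di_last eqxx andbT; lia.
by apply/eqP; rewrite eq_le {1}D1_last !mono'; lia.
Qed.

Lemma proc_sound pick : valid_pick pick -> proc n pick f -> convex n f.
Proof.
move=> valid [/nilP candidates_nonnil [conv f_f1]].
set j := pick (candidates n f) in conv f_f1.
have j_candidate : j \in candidates n f by apply/valid/eqP.
have range_j : (1 <= j <= n)%N by move: j_candidate; rewrite mem_candidates => /andP[].
have split_j := candidate_split j_candidate f_f1.
apply/convexP/(split_nondecreasing split_j).
exact: split_dderiv_le conv.
Qed.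

Lemma proc_complete pick : valid_pick pick -> convex n f -> proc n pick f.
Proof.
move=> valid conv; have /convexP/nondecreasing_split[j range_j split_j] := conv.
have f_f1 : f j = f1 n f j by apply: (f1_split split_j); lia.
have f_f2 : f j = f2 n f j by apply: (f2_split _ split_j); lia.
have j_candidate : j \in candidates n f.
  by rewrite mem_candidates range_j -f_f1 -f_f2 eqxx.
have candidates_nonnil : candidates n f != [::] by apply: contraTneq j_candidate => ->.
have := valid _ candidates_nonnil; set k := pick (candidates n f).
rewrite mem_candidates => /andP[range_k /eqP f1_f2].
split; first exact/nilP/eqP.
rewrite -/k; split.
  apply: convex_on_subset conv => x; rewrite !inE mem_iota.
  by move=> /or4P[/eqP->|/eqP->|/eqP->|/orP[]/eqP->]; lia.
have [le_kj | lt_jk] := leqP k j; first by apply: (f1_split split_j); lia.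
by rewrite f1_f2; apply: (f2_split _ split_j); lia.
Qed.

End Procedure.

Lemma proc_eq_on_queries (R : realFieldType) n pick (f g : nat -> R) :
  {in queries n pick f, f =1 g} -> proc n pick g <-> proc n pick f.
Proof.
move=> eq_fg.
have eq_ends x : x \in [:: 1%N; 2%N; n.-1; n] -> f x = g x.
  by move=> ends_x; apply: eq_fg; rewrite mem_cat ends_x.
have eq_f1 x : f1 n g x = f1 n f x by rewrite /f1 -!eq_ends // !inE eqxx ?orbT.
have eq_f2 x : f2 n g x = f2 n f x by rewrite /f2 -!eq_ends // !inE eqxx ?orbT.
have eq_candidates : candidates n g = candidates n f.
  by apply: eq_filter => x; rewrite eq_f1 eq_f2.
move: eq_fg; rewrite /proc /queries eq_candidates.
case: (candidates n f) => [|c cs] /= eq_fg; first by split; case.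
set j := pick (c :: cs).
have eq_B : {in [:: 1%N; 2%N; j; n.-1; n], f =1 g}.
  move=> x; rewrite !inE => /or3P[/eqP ->|/eqP ->|]; try by apply: eq_ends.
  by case/orP=> [/eqP ->|/orP[] /eqP ->]; apply: eq_fg; rewrite !inE eqxx ?orbT.
have eq_j : f j = g j by apply: eq_B; rewrite !inE eqxx ?orbT.
split=> -[_ [conv f_f1]]; split=> //; split.
- by apply: convex_on_eq conv => x /eq_B ->.
- by rewrite eq_j f_f1 eq_f1.
- exact: convex_on_eq eq_B conv.
- by rewrite -eq_j f_f1 eq_f1.
Qed.

Theorem theorem1 (R : realFieldType) (n : nat) (f : nat -> R)
  (pick : seq nat -> nat) :
  (3 <= n)%N -> (num_dderivs n f <= 2)%N -> valid_pick pick ->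
  [/\ (size (queries n pick f) <= 5)%N,
      (forall g : nat -> R, {in queries n pick f, f =1 g} ->
         (proc n pick g <-> proc n pick f))
    & (proc n pick f <-> convex n f)].
Proof.
move=> n_ge3 few_dderivs valid; split.
- by rewrite /queries; case: candidates.
- by move=> g; apply: proc_eq_on_queries.
- by split; [apply: proc_sound | apply: proc_complete].
Qed.
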